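(* Let $(\mathcal{X},\|\cdot\|)$ be a real Banach space, $P$ a probability distribution on a measurable space $\mathcal{E}$, and $Q,P_e:\mathcal{X}\to\mathcal{X}$ ($e\in\mathcal{E}$). Assume: (A1) $\|Q(\theta_1)-Q(\theta_2)\|\le\rho\|\theta_1-\theta_2\|$ for all $\theta_1,\theta_2$, with $\rho\in[0,1)$, and $\theta^\star$ is the unique fixed point of $Q$; (A2) $\|P_e(\theta_1)-P_e(\theta_2)\|\le L\|\theta_1-\theta_2\|$ for all $\theta_1,\theta_2$ and all $e$, with $L\ge0$; (A3) $W_e:=\|P_e(\theta^\star)-\theta^\star\|$ satisfies $\mathbb{E}_{e\sim P}[W_e]\le\sigma$ for some $\sigma\ge0$. Let $\theta_0\in\mathcal{X}$, let $e_0,e_1,\dots$ be i.i.d. with law $P$, and set $\theta_{t+1}=Q(P_{e_t}(\theta_t))$. Let $\gamma:=\rho L$ and $u_t:=\mathbb{E}[\|\theta_t-\theta^\star\|]$. Then: (i) if $\gamma<1$, $u_t\le\gamma^tu_0+\rho\sigma\frac{1-\gamma^t}{1-\gamma}$ for all $t$; (ii) $\mathbb{E}[\Omega(\theta_t;e_t)]\le2\gamma u_t+(1+\rho)\sigma$ for all $t$; (iii) if $\sigma=0$ and $\gamma<1$, then almost surely, for all $t$, $\|\theta_t-\theta^\star\|\le\gamma^t\|\theta_0-\theta^\star\|$ and $\Omega(\theta_t;e_t)\le2\gamma^{t+1}\|\theta_0-\theta^\star\|$.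
   Context: The order-gap is $\Omega(\theta;e):=\|Q(P_e(\theta))-P_e(Q(\theta))\|$. The events $e_t$ are independent of $\theta_0$ (which is deterministic), and $e_t$ is independent of $\theta_t$. *)

From HB Require Import structures.
From mathcomp Require Import all_boot all_order all_algebra.
From mathcomp Require Import all_classical all_reals all_analysis.
Set Implicit Arguments. Unset Strict Implicit. Unset Printing Implicit Defensive.
Import Order.TTheory GRing.Theory Num.Theory.
Import numFieldNormedType.Exports.
Local Open Scope classical_set_scope.
Local Open Scope ring_scope.

Definition order_gap (R : realType) (X : normedModType R) (E : Type)
  (Q : X -> X) (Pe : E -> X -> X) (theta : X) (e : E) : R :=
  `| Q (Pe e theta) - Pe e (Q theta) |.

Fixpoint iterate (R : realType) (X : normedModType R) (E Omega : Type)
  (Q : X -> X) (Pe : E -> X -> X) (e : nat -> Omega -> E) (theta0 : X)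
  (t : nat) (w : Omega) : X :=
  match t with
  | 0 => theta0
  | t'.+1 => Q (Pe (e t' w) (iterate Q Pe e theta0 t' w))
  end.

Definition mutually_independent d d' (Omega : measurableType d)
  (E : measurableType d') (R : realType) (P : probability Omega R)
  (e : nat -> Omega -> E) : Prop :=
  forall (I : seq nat) (A : nat -> set E), uniq I ->
    (forall i, i \in I -> measurable (A i)) ->
    P (\bigcap_(i in [set i | i \in I]) (e i @^-1` A i)) =
    (\prod_(i <- I) P (e i @^-1` A i))%E.

Definition has_law d d' (Omega : measurableType d)
  (E : measurableType d') (R : realType) (P : probability Omega R)
  (PE : probability E R) (f : Omega -> E) : Prop :=
  measurable_fun setT f /\
  forall A : set E, measurable A -> P (f @^-1` A) = PE A.

From HB Require Import structures.
From mathcomp Require Import all_boot all_order all_algebra.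
From mathcomp Require Import all_classical all_reals all_analysis.
From mathcomp Require Import measurable_realfun ring.
Set Implicit Arguments. Unset Strict Implicit. Unset Printing Implicit Defensive.
Import Order.TTheory GRing.Theory Num.Theory.
Import numFieldNormedType.Exports.
Local Open Scope classical_set_scope.
Local Open Scope ring_scope.

(* Writing W_e := |P_e θ* - θ*|, the two Lipschitz bounds and Q θ* = θ*
   give, along every sample path,
     |θ_{t+1} - θ*| <= γ |θ_t - θ*| + ρ W_{e_t},
     Ω(θ_t; e_t)    <= 2γ |θ_t - θ*| + (1 + ρ) W_{e_t}.
   Since e_t has law P, E[W_{e_t}] <= σ; taking expectations gives
   u_{t+1} <= γ u_t + ρσ, which unrolls to (i), and gives (ii) directly.
   For (iii), σ = 0 forces W_e = 0 for P-almost every e, hence almost surely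
   W_{e_t} = 0 for all t, and both pathwise bounds become geometric. *)

Section pathwise_bounds.
Variables (R : realType) (X : normedModType R) (E : Type).
Variables (Q : X -> X) (Pe : E -> X -> X) (rho L : R) (thetas : X).
Hypotheses (rho_ge0 : 0 <= rho) (L_ge0 : 0 <= L).
Hypothesis Q_lip : forall x y, `|Q x - Q y| <= rho * `|x - y|.
Hypothesis Q_fix : Q thetas = thetas.
Hypothesis Pe_lip : forall ev x y, `|Pe ev x - Pe ev y| <= L * `|x - y|.

Lemma Q_dist_fix_le x : `|Q x - thetas| <= rho * `|x - thetas|.
Proof. by rewrite -{1}Q_fix; apply: Q_lip. Qed.

Lemma Pe_dist_fix_le ev x :
  `|Pe ev x - thetas| <= L * `|x - thetas| + `|Pe ev thetas - thetas|.
Proof.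
have := ler_normD (Pe ev x - Pe ev thetas) (Pe ev thetas - thetas).
by rewrite addrA subrK => /le_trans; apply; rewrite lerD2r.
Qed.

Lemma QPe_dist_fix_le ev x :
  `|Q (Pe ev x) - thetas|
    <= rho * L * `|x - thetas| + rho * `|Pe ev thetas - thetas|.
Proof.
apply: le_trans (Q_dist_fix_le _) _; rewrite -mulrA -mulrDr.
exact/ler_wpM2l/Pe_dist_fix_le.
Qed.

Lemma order_gap_le ev x :
  order_gap Q Pe x ev
    <= 2 * (rho * L) * `|x - thetas| + (1 + rho) * `|Pe ev thetas - thetas|.
Proof.
rewrite /order_gap; set W := `|Pe ev thetas - thetas|.
have -> : Q (Pe ev x) - Pe ev (Q x)
    = (Q (Pe ev x) - thetas) - (Pe ev (Q x) - thetas).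
  by rewrite opprB addrA subrK.
apply: le_trans (ler_normB _ _) _.
have PeQ_le : `|Pe ev (Q x) - thetas| <= rho * L * `|x - thetas| + W.
  apply: le_trans (Pe_dist_fix_le _ _) _; rewrite lerD2r [rho * L]mulrC -mulrA.
  exact/ler_wpM2l/Q_dist_fix_le.
have -> : 2 * (rho * L) * `|x - thetas| + (1 + rho) * W
    = (rho * L * `|x - thetas| + rho * W) + (rho * L * `|x - thetas| + W).
  by ring.
exact: lerD (QPe_dist_fix_le ev x) PeQ_le.
Qed.

Lemma iterate_dist_fix_le_geometric (Omega : Type) (e : nat -> Omega -> E)
    theta0 w :
  (forall t, Pe (e t w) thetas = thetas) ->
  forall t, `|iterate Q Pe e theta0 t w - thetas|
              <= (rho * L) ^+ t * `|theta0 - thetas|.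
Proof.
move=> Pe_fix; elim=> [|t IH] /=; first by rewrite expr0 mul1r.
apply: le_trans (QPe_dist_fix_le _ _) _.
rewrite Pe_fix subrr normr0 mulr0 addr0 exprS -!mulrA.
by do 2 apply: ler_wpM2l => //.
Qed.

End pathwise_bounds.

Lemma affine_recursion_le (R : realFieldType) (u : nat -> \bar R) (g c x : R) :
  0 <= g -> g != 1 -> u 0%N = x%:E ->
  (forall t, u t.+1 <= g%:E * u t + c%:E)%E ->
  forall t, (u t <= (g ^+ t * x + c * ((1 - g ^+ t) / (1 - g)))%:E)%E.
Proof.
move=> g_ge0 g_neq1 u0 u_step; elim=> [|t IH].
  by rewrite u0 expr0 subrr mul0r mulr0 addr0 mul1r.
have -> : g ^+ t.+1 * x + c * ((1 - g ^+ t.+1) / (1 - g))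
    = g * (g ^+ t * x + c * ((1 - g ^+ t) / (1 - g))) + c.
  by rewrite exprS; field; rewrite subr_eq0 eq_sym.
apply: le_trans (u_step t) _.
by rewrite EFinD EFinM leeD2r // lee_wpmul2l // lee_fin.
Qed.

Section nonneg_integrals.
Variables (d : measure_display) (T : measurableType d) (R : realType).
Implicit Types (mu : {measure set T -> \bar R}) (f g h : T -> R).

Lemma ge0_integral_lincomb mu f g a b :
  0 <= a -> 0 <= b -> (forall x, 0 <= f x) -> (forall x, 0 <= g x) ->
  measurable_fun setT f -> measurable_fun setT g ->
  (\int[mu]_x (a * f x + b * g x)%:E
   = a%:E * \int[mu]_x (f x)%:E + b%:E * \int[mu]_x (g x)%:E)%E.
Proof.
move=> a_ge0 b_ge0 f_ge0 g_ge0 mf mg.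
have EFin_ge0 (k : T -> R) :
    (forall x, 0 <= k x) -> forall x, setT x -> (0 <= (k x)%:E)%E.
  by move=> k_ge0 x _; rewrite lee_fin.
under eq_integral do rewrite EFinD.
rewrite ge0_integralD //; last 4 first.
- by apply: EFin_ge0 => x; rewrite mulr_ge0.
- by apply/measurable_EFinP; apply: measurable_funM.
- by apply: EFin_ge0 => x; rewrite mulr_ge0.
- by apply/measurable_EFinP; apply: measurable_funM.
rewrite (ge0_integralZl_EFin _ _ (EFin_ge0 _ f_ge0)) //.
  by rewrite (ge0_integralZl_EFin _ _ (EFin_ge0 _ g_ge0)) //;
    exact/measurable_EFinP.
exact/measurable_EFinP.
Qed.

Lemma ge0_integral_le_lincomb mu f g h a b s :
  (\int[mu]_x (h x)%:E <= s%:E)%E ->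
  0 <= a -> 0 <= b -> (forall x, 0 <= g x) -> (forall x, 0 <= h x) ->
  measurable_fun setT f -> measurable_fun setT g -> measurable_fun setT h ->
  (forall x, 0 <= f x <= a * g x + b * h x) ->
  (\int[mu]_x (f x)%:E <= a%:E * \int[mu]_x (g x)%:E + (b * s)%:E)%E.
Proof.
move=> int_h_le a_ge0 b_ge0 g_ge0 h_ge0 mf mg mh f_le.
apply: (@le_trans _ _ (\int[mu]_x (a * g x + b * h x)%:E)%E).
  apply: ge0_le_integral => //.
  - by move=> x _; rewrite lee_fin; case/andP: (f_le x).
  - exact/measurable_EFinP.
  - apply/measurable_EFinP.
    by apply: measurable_funD; apply: measurable_funM.
  - by move=> x _; rewrite lee_fin; case/andP: (f_le x).
rewrite ge0_integral_lincomb // leeD2l // EFinM.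
by apply: lee_wpmul2l; rewrite ?lee_fin.
Qed.

Lemma ge0_integral_le0_ae mu h :
  measurable_fun setT h -> (forall x, 0 <= h x) ->
  (\int[mu]_x (h x)%:E <= 0)%E -> {ae mu, forall x, h x = 0}.
Proof.
move=> mh h_ge0 int_h_le0.
have mEh : measurable_fun setT (EFin \o h) by exact/measurable_EFinP.
have [h_ae _] := ae_eq_integral_abs mu measurableT mEh.
apply: filterS (h_ae _) => [x /(_ I) [] //|].
apply/eqP; rewrite eq_le integral_ge0 ?andbT //.
rewrite (eq_integral (fun x => (h x)%:E)) // => x _.
by rewrite compE abse_EFin ger0_norm.
Qed.

End nonneg_integrals.

Section law_transfer.
Variables (d d' : measure_display) (Omega : measurableType d).
Variables (E : measurableType d') (R : realType).
Variables (P : probability Omega R) (PE : probability E R) (f : Omega -> E).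
Hypothesis f_law : has_law P PE f.

Lemma integral_has_law (h : E -> R) :
  measurable_fun setT h -> (forall x, 0 <= h x) ->
  (\int[P]_w (h (f w))%:E = \int[PE]_x (h x)%:E)%E.
Proof.
move: f_law => [mf lawf] mh h_ge0.
rewrite [RHS](eq_measure_integral (pushforward P f)); last first.
  by move=> A mA _; exact: esym (lawf A mA).
rewrite ge0_integral_pushforward //; first exact/measurable_EFinP.
by move=> x _; rewrite lee_fin.
Qed.

Lemma has_law_ae (A : E -> Prop) :
  {ae PE, forall x, A x} -> {ae P, forall w, A (f w)}.
Proof.
move: f_law => [mf lawf] [N [mN PEN0 notA_N]].
exists (f @^-1` N); split; last by move=> w /notA_N.
- by rewrite -[f @^-1` N]setTI; exact: mf.
- by rewrite lawf.
Qed.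

End law_transfer.

Theorem theorem4p10 (R : realType) (X : completeNormedModType R)
  (dE : measure_display) (E : measurableType dE) (PE : probability E R)
  (dO : measure_display) (Omega : measurableType dO) (P : probability Omega R)
  (Q : X -> X) (Pe : E -> X -> X) (rho L sigma : R) (thetas theta0 : X)
  (e : nat -> Omega -> E) :
  (* (A1) *)
  0 <= rho -> rho < 1 ->
  (forall x y : X, `|Q x - Q y| <= rho * `|x - y|) ->
  Q thetas = thetas -> (forall y : X, Q y = y -> y = thetas) ->
  (* (A2) *)
  0 <= L ->
  (forall (ev : E) (x y : X), `|Pe ev x - Pe ev y| <= L * `|x - y|) ->
  (* (A3) *)
  0 <= sigma ->
  measurable_fun setT (fun ev : E => `|Pe ev thetas - thetas|) ->
  (\int[PE]_ev (`|Pe ev thetas - thetas|)%:E <= sigma%:E)%E ->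
  (* e_0, e_1, ... i.i.d. with law PE *)
  (forall t, has_law P PE (e t)) ->
  mutually_independent P e ->
  (* measurability of the real-valued quantities whose expectations are taken *)
  (forall t, measurable_fun setT
     (fun w => `|iterate Q Pe e theta0 t w - thetas|)) ->
  (forall t, measurable_fun setT
     (fun w => order_gap Q Pe (iterate Q Pe e theta0 t w) (e t w))) ->
  let theta := iterate Q Pe e theta0 in
  let gamma := rho * L in
  let u := fun t => (\int[P]_w (`|theta t w - thetas|)%:E)%E in
  (* (i) *)
  (gamma < 1 -> forall t : nat,
     (u t <= (gamma ^+ t)%:E * u 0%N
             + (rho * sigma * ((1 - gamma ^+ t) / (1 - gamma)))%:E)%E) /\
  (* (ii) *)
  (forall t : nat,
     (\int[P]_w (order_gap Q Pe (theta t w) (e t w))%:E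
        <= (2 * gamma)%:E * u t + ((1 + rho) * sigma)%:E)%E) /\
  (* (iii) *)
  (sigma = 0 -> gamma < 1 ->
     {ae P, forall w, forall t : nat,
        `|theta t w - thetas| <= gamma ^+ t * `|theta0 - thetas| /\
        order_gap Q Pe (theta t w) (e t w)
          <= 2 * gamma ^+ t.+1 * `|theta0 - thetas| }).
Proof.
move=> rho_ge0 rho_lt1 Q_lip Q_fix _ L_ge0 Pe_lip sigma_ge0 mW EW_le law _.
move=> mdist mgap theta gamma u.
pose W ev := `|Pe ev thetas - thetas|.
have gamma_ge0 : 0 <= gamma by rewrite mulr_ge0.
have QPe_le := QPe_dist_fix_le rho_ge0 Q_lip Q_fix Pe_lip.
have gap_le := order_gap_le rho_ge0 L_ge0 Q_lip Q_fix Pe_lip.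
have mWe t : measurable_fun setT (fun w => W (e t w)).
  exact: measurableT_comp mW (law t).1.
have EWe_le t : (\int[P]_w (W (e t w))%:E <= sigma%:E)%E.
  by rewrite (integral_has_law (law t)) // => ev; exact: normr_ge0.
have u0 : u 0%N = (`|theta0 - thetas|)%:E.
  rewrite /u /= (integral_cst P measurableT (`|theta0 - thetas|)%:E).
  by rewrite -[RHS]mule1; congr (_ * _)%E; exact: probability_setT.
have u_step t : (u t.+1 <= gamma%:E * u t + (rho * sigma)%:E)%E.
  apply: (ge0_integral_le_lincomb (EWe_le t)) => // [w|w].
    exact: normr_ge0.
  by rewrite normr_ge0 /= QPe_le.
split; [|split].
- move=> gamma_lt1 t; rewrite u0 -EFinM -EFinD.
  by apply: affine_recursion_le; rewrite ?lt_eqF.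
- move=> t; apply: (ge0_integral_le_lincomb (EWe_le t));
    rewrite ?mulr_ge0 ?addr_ge0 //; move=> w.
    exact: normr_ge0.
  by apply/andP; split; [exact: normr_ge0 | exact: gap_le].
move=> sigma0 gamma_lt1.
have W_ae : {ae PE, forall ev, W ev = 0}.
  apply: ge0_integral_le0_ae => //; first by move=> ev; exact: normr_ge0.
  by move: EW_le; rewrite sigma0.
have Pe_fix_ae : {ae P, forall w t, Pe (e t w) thetas = thetas}.
  apply: ae_foralln => t; apply: filterS (has_law_ae (law t) W_ae) => w.
  by move=> /normr0_eq0 /subr0_eq.
apply: filterS Pe_fix_ae => w Pe_fix t.
have dist_le :=
  iterate_dist_fix_le_geometric rho_ge0 L_ge0 Q_lip Q_fix Pe_lip theta0 Pe_fix.
split; first exact: dist_le.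
apply: le_trans (gap_le _ _) _.
rewrite Pe_fix subrr normr0 mulr0 addr0 exprS -!mulrA.
by do 3 apply: ler_wpM2l => //; exact: dist_le.
Qed.
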